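(* Let $\Pi$ be a ground HEX-program, let $\hat{\mathbf{A}}$ be a compatible set of $\Pi$, and let $\mathbf{A}$ be the restriction of $\hat{\mathbf{A}}$ to the non-replacement (ordinary) atoms. Let $U$ be an unfounded set of $\Pi$ with respect to $\mathbf{A}$. If there are no $x,y\in U$ with $x\rightarrow_e y$, then $U$ is an unfounded set of the guessing program $\hat\Pi$ with respect to $\hat{\mathbf{A}}$.
   Context: Ground HEX-programs. A ground ordinary atom is $p(c_1,\dots,c_\ell)$. A ground external atom is $\&g[\vec p](\vec c)$ with input list $\vec p$ (predicate names or constants) and output constants $\vec c$. A ground HEX-program is a finite set of rules $r$: $a_1\lor\dots\lor a_k\leftarrow b_1,\dots,b_m,\mathrm{not}\,b_{m+1},\dots,\mathrm{not}\,b_n$, with ordinary ground head atoms and each $b_j$ an ordinary or external ground atom; $H(r)$, $B^+(r)=\{b_1,\dots,b_m\}$, $B^-(r)=\{b_{m+1},\dots,b_n\}$, $B(r)$ the set of body literals. Interpretations: complete consistent sets $\mathbf{A}$ of signed literals $\mathbf{T}a$/$\mathbf{F}a$. $\mathbf{A}\models a$ (ordinary) iff $\mathbf{T}a\in\mathbf{A}$; $\mathbf{A}\models\&g[\vec p](\vec c)$ iff the Boolean oracle $f_{\&g}(\mathbf{A},\vec p,\vec c)=1$, whose value depends only on the extensions in $\mathbf{A}$ of the input predicates in $\vec p$; $\mathbf{A}\models\mathrm{not}\,b$ iff $\mathbf{A}\not\models b$. Unfounded sets: for a set $X$ of ordinary ground atoms appearing in a program $P$, $\mathbf{A}\,\dot\cup\neg.\,X=(\mathbf{A}\setminus\{\mathbf{T}a\mid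 a\in X\})\cup\{\mathbf{F}a\mid a\in X\}$; $X$ is an unfounded set of $P$ w.r.t. $\mathbf{A}$ iff for every $r\in P$ with $H(r)\cap X\neq\emptyset$: (i) some literal of $B(r)$ is false w.r.t. $\mathbf{A}$, or (ii) some literal of $B(r)$ is false w.r.t. $\mathbf{A}\,\dot\cup\neg.\,X$, or (iii) some atom of $H(r)\setminus X$ is true w.r.t. $\mathbf{A}$. Guessing program and compatible sets: $\hat\Pi$ is obtained from $\Pi$ by replacing each external atom $\&g[\vec p](\vec c)$ by a new ordinary replacement atom $e_{\&g[\vec p]}(\vec c)$ and adding the rule $e_{\&g[\vec p]}(\vec c)\lor ne_{\&g[\vec p]}(\vec c)\leftarrow$. A compatible set of $\Pi$ is an interpretation $\hat{\mathbf{A}}$ that is a (Gelfond–Lifschitz) answer set of $\hat\Pi$ such that $f_{\&g}(\hat{\mathbf{A}},\vec p,\vec c)=1$ iff $\mathbf{T}e_{\&g[\vec p]}(\vec c)\in\hat{\mathbf{A}}$ for all external atoms $\&g[\vec p](\vec c)$ of $\Pi$. Dependencies: $x\rightarrow_e y$ iff some $r\in\Pi$ has $x\in H(r)$ and an external atom $\&g[q_1,\dots,q_n](\vec e)\in B^+(r)\cup B^-(r)$ with some $q_i$ equal to the predicate of $y$. *)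

From Stdlib Require Import List.
Import ListNotations.
Set Implicit Arguments.

Section Hex.
Variables (Pred Const G : Type).

Record oatom := OAtom { apred : Pred; aargs : list Const }.

Inductive input := IPred (p : Pred) | IConst (c : Const).

Record eatom := EAtom { ename : G; einput : list input; eoutput : list Const }.

Inductive batom := BOrd (a : oatom) | BExt (e : eatom).

Record rule (H B : Type) := Rule { head : list H; pos : list B; neg : list B }.

(* interpretations: A a  <->  T a in A (complete and consistent) *)
Definition interp (H : Type) := H -> Prop.

Definition oracle := G -> interp oatom -> list input -> list Const -> Prop.

Definition oracle_ok (f : oracle) : Prop :=
  forall g p c (A1 A2 : interp oatom),
    (forall a, In (IPred (apred a)) p -> (A1 a <-> A2 a)) ->
    (f g A1 p c <-> f g A2 p c).

Section Generic.
Variables (H B : Type).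
Variable sat : interp H -> B -> Prop.
Variable batoms : B -> list H.

Definition appears (P : list (rule H B)) (a : H) : Prop :=
  exists r, In r P /\
    (In a (head r) \/ exists b, (In b (pos r) \/ In b (neg r)) /\ In a (batoms b)).

Definition body_false (I : interp H) (r : rule H B) : Prop :=
  (exists b, In b (pos r) /\ ~ sat I b) \/ (exists b, In b (neg r) /\ sat I b).

Definition upd (A : interp H) (X : H -> Prop) : interp H := fun a => A a /\ ~ X a.

Definition unfounded (P : list (rule H B)) (A : interp H) (X : H -> Prop) : Prop :=
  (forall a, X a -> appears P a) /\
  forall r, In r P -> (exists a, In a (head r) /\ X a) ->
    body_false A r \/ body_false (upd A X) r \/
    (exists a, In a (head r) /\ ~ X a /\ A a).
End Generic.

Definition hex_program := list (rule oatom batom).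

Definition sat_hex (f : oracle) (A : interp oatom) (b : batom) : Prop :=
  match b with
  | BOrd a => A a
  | BExt e => f (ename e) A (einput e) (eoutput e)
  end.

Definition batoms_hex (b : batom) : list oatom :=
  match b with BOrd a => [a] | BExt _ => [] end.

Definition unfounded_hex (f : oracle) (P : hex_program) (A : interp oatom)
  (X : oatom -> Prop) : Prop :=
  unfounded (sat_hex f) batoms_hex P A X.

Definition ext_in (P : hex_program) (e : eatom) : Prop :=
  exists r, In r P /\ (In (BExt e) (pos r) \/ In (BExt e) (neg r)).

Definition edep (P : hex_program) (x y : oatom) : Prop :=
  exists r e, In r P /\ In x (head r) /\
    (In (BExt e) (pos r) \/ In (BExt e) (neg r)) /\
    In (IPred (apred y)) (einput e).

(* atoms of the guessing program: ordinary atoms and replacement atoms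
   GRep true e = e_{&g[p]}(c), GRep false e = ne_{&g[p]}(c) *)
Inductive gatom := GOrd (a : oatom) | GRep (pol : bool) (e : eatom).

Definition guess_program := list (rule gatom gatom).

Definition repl (b : batom) : gatom :=
  match b with BOrd a => GOrd a | BExt e => GRep true e end.

Definition hat_rule (r : rule oatom batom) : rule gatom gatom :=
  Rule (map GOrd (head r)) (map repl (pos r)) (map repl (neg r)).

Definition ext_atoms_rule (r : rule oatom batom) : list eatom :=
  flat_map (fun b => match b with BExt e => [e] | BOrd _ => [] end) (pos r ++ neg r).

Definition guess_rule (e : eatom) : rule gatom gatom :=
  Rule [GRep true e; GRep false e] [] [].

Definition hat (P : hex_program) : guess_program :=
  map hat_rule P ++ map guess_rule (flat_map ext_atoms_rule P).

Definition sat_ord (I : interp gatom) (b : gatom) : Prop := I b.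
Definition batoms_ord (b : gatom) : list gatom := [b].

Definition unfounded_ord (P : guess_program) (A : interp gatom) (X : gatom -> Prop) : Prop :=
  unfounded sat_ord batoms_ord P A X.

(* M is a model of the GL-reduct P^I: rules whose negative body is satisfied
   by I, with the negative body removed *)
Definition model_of_reduct (P : guess_program) (I M : interp gatom) : Prop :=
  forall r, In r P -> (forall b, In b (neg r) -> ~ I b) ->
    (forall b, In b (pos r) -> M b) -> exists a, In a (head r) /\ M a.

Definition answer_set (P : guess_program) (I : interp gatom) : Prop :=
  model_of_reduct P I I /\
  forall M, model_of_reduct P I M -> (forall a, M a -> I a) -> forall a, I a -> M a.

Definition restr (Ah : interp gatom) : interp oatom := fun a => Ah (GOrd a).

(* compatible sets; since f_{&g} depends only on the input predicates (all
   ordinary predicates of Pi), f_{&g}(Ah, ...) is evaluated on restr Ah *)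
Definition compatible (f : oracle) (P : hex_program) (Ah : interp gatom) : Prop :=
  answer_set (hat P) Ah /\
  forall e, ext_in P e ->
    (f (ename e) (restr Ah) (einput e) (eoutput e) <-> Ah (GRep true e)).
End Hex.

Arguments GOrd {Pred Const G}.
Arguments GRep {Pred Const G}.

(** Replacing each external atom by its replacement atom does not change the
    truth of any rule body under a compatible set.  Falsifying the atoms of
    [U] changes the truth of an external atom only if [U] contains an atom
    over one of its input predicates; for a rule with a head atom in [U] this
    would be an [->_e] edge inside [U].  Hence each of the three unfoundedness
    conditions transfers rule by rule from [Pi] to its image in [hat Pi],
    while the guessing rules have no ordinary head atom at all. *)
From Stdlib Require Import List.

Set Implicit Arguments.
Unset Strict Implicit.

Section GuessingProgram.
Variables (Pred Const G : Type).
Variable f : oracle Pred Const G.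

Definition ord_lift (U : oatom Pred Const -> Prop) : interp (gatom Pred Const G) :=
  fun g => match g with GOrd a => U a | GRep _ _ => False end.

Definition repl_agrees (Ah : interp (gatom Pred Const G)) (e : eatom Pred Const G) : Prop :=
  f (ename e) (restr Ah) (einput e) (eoutput e) <-> Ah (GRep true e).

Lemma compatible_repl_agrees (P : hex_program Pred Const G) Ah r e :
  compatible f P Ah -> In r P -> In (BExt e) (pos r) \/ In (BExt e) (neg r) ->
  repl_agrees Ah e.
Proof. intros [_ Hext] Hr He; apply Hext; exists r; auto. Qed.

Lemma in_hat (P : hex_program Pred Const G) r : In r P -> In (hat_rule r) (hat P).
Proof. intro Hr; apply in_or_app; left; apply in_map; exact Hr. Qed.

Lemma in_hat_inv (P : hex_program Pred Const G) r :
  In r (hat P) ->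
  (exists r0, In r0 P /\ r = hat_rule r0) \/ (exists e, r = guess_rule e).
Proof.
  intro Hr; apply in_app_or in Hr as [Hr | Hr]; apply in_map_iff in Hr as [x [<- Hx]].
  - left; exists x; auto.
  - right; exists x; reflexivity.
Qed.

Lemma oracle_upd_irrelevant (A : interp (oatom Pred Const)) (U : oatom Pred Const -> Prop)
  (e : eatom Pred Const G) :
  oracle_ok f -> (forall a, In (IPred Const (apred a)) (einput e) -> ~ U a) ->
  f (ename e) (upd A U) (einput e) (eoutput e) <-> f (ename e) A (einput e) (eoutput e).
Proof. intros Hf HU; apply Hf; intros a Ha; unfold upd; specialize (HU a Ha); tauto. Qed.

Lemma sat_repl_restr Ah b :
  (forall e, b = BExt e -> repl_agrees Ah e) ->
  sat_hex f (restr Ah) b <-> sat_ord Ah (repl b).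
Proof. destruct b as [a | e]; intro Hb; [reflexivity | exact (Hb e eq_refl)]. Qed.

Lemma sat_repl_upd Ah U b :
  oracle_ok f ->
  (forall e, b = BExt e ->
     repl_agrees Ah e /\ forall a, In (IPred Const (apred a)) (einput e) -> ~ U a) ->
  sat_hex f (upd (restr Ah) U) b <-> sat_ord (upd Ah (ord_lift U)) (repl b).
Proof.
  intros Hf Hb; destruct b as [a | e]; [reflexivity |].
  destruct (Hb e eq_refl) as [Hagree HU]; simpl; unfold sat_ord, upd; simpl.
  unfold repl_agrees in Hagree.
  rewrite (oracle_upd_irrelevant (restr Ah) Hf HU), Hagree; tauto.
Qed.

Lemma body_false_hat_rule (I : interp (oatom Pred Const)) (J : interp (gatom Pred Const G)) r :
  (forall b, In b (pos r) \/ In b (neg r) -> (sat_hex f I b <-> sat_ord J (repl b))) ->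
  body_false (sat_hex f) I r -> body_false (@sat_ord Pred Const G) J (hat_rule r).
Proof.
  intros Hsat [[b [Hb Hs]] | [b [Hb Hs]]]; [left | right];
    exists (repl b); (split; [apply in_map; exact Hb |]);
    rewrite <- Hsat by auto; exact Hs.
Qed.

Lemma appears_hat (P : hex_program Pred Const G) a :
  appears (@batoms_hex Pred Const G) P a -> appears (@batoms_ord Pred Const G) (hat P) (GOrd a).
Proof.
  intros [r [Hr [Hh | [[a' | e] [Hb Ha]]]]]; exists (hat_rule r); split;
    try apply in_hat, Hr.
  - left; apply in_map; exact Hh.
  - destruct Ha as [-> | []]; right; exists (repl (BOrd G a)); split; [| left; reflexivity].
    destruct Hb as [Hb | Hb]; [left | right]; apply in_map; exact Hb.
  - destruct Ha.
Qed.

Lemma unfounded_cond_hat_rule (P : hex_program Pred Const G) Ah U r a :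
  oracle_ok f -> compatible f P Ah -> In r P -> In a (head r) -> U a ->
  ~ (exists x y, U x /\ U y /\ edep P x y) ->
  (body_false (sat_hex f) (restr Ah) r \/ body_false (sat_hex f) (upd (restr Ah) U) r \/
   (exists a', In a' (head r) /\ ~ U a' /\ restr Ah a')) ->
  body_false (@sat_ord Pred Const G) Ah (hat_rule r) \/
  body_false (@sat_ord Pred Const G) (upd Ah (ord_lift U)) (hat_rule r) \/
  (exists g, In g (head (hat_rule r)) /\ ~ ord_lift U g /\ Ah g).
Proof.
  intros Hf Hcomp Hr Ha HUa Hdep HUr.
  assert (Hagree : forall b e, In b (pos r) \/ In b (neg r) -> b = BExt e ->
            repl_agrees Ah e) by
    (intros b e Hb ->; exact (compatible_repl_agrees Hcomp Hr Hb)).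
  assert (Hinput : forall b e, In b (pos r) \/ In b (neg r) -> b = BExt e ->
            forall a', In (IPred Const (apred a')) (einput e) -> ~ U a').
  { intros b e Hb -> a' Hin HUa'; apply Hdep; exists a, a'; repeat split; auto.
    exists r, e; auto. }
  destruct HUr as [Hfalse | [Hfalse | [a' [Ha' [HUa' HAa']]]]].
  - left; apply (body_false_hat_rule (I := restr Ah)); [| exact Hfalse].
    intros b Hb; apply sat_repl_restr; eauto.
  - right; left; apply (body_false_hat_rule (I := upd (restr Ah) U)); [| exact Hfalse].
    intros b Hb; apply sat_repl_upd; eauto.
  - right; right; exists (GOrd a'); split; [apply in_map; exact Ha' | auto].
Qed.

End GuessingProgram.

Theorem lemma2 (Pred Const G : Type) (f : oracle Pred Const G)
  (Hf : oracle_ok f)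
  (Pi : hex_program Pred Const G) (Ahat : interp (gatom Pred Const G))
  (Hcomp : compatible f Pi Ahat)
  (U : oatom Pred Const -> Prop)
  (HU : unfounded_hex f Pi (restr Ahat) U)
  (Hdep : ~ (exists x y, U x /\ U y /\ edep Pi x y)) :
  unfounded_ord (hat Pi) Ahat
    (fun g => match g with GOrd a => U a | GRep _ _ => False end).
Proof.
  destruct HU as [HUapp HUrule]; split.
  - intros [a | pol e] Ha; [apply appears_hat, HUapp, Ha | destruct Ha].
  - intros r Hr [g [Hg HUg]].
    destruct (in_hat_inv Hr) as [[r0 [Hr0 ->]] | [e ->]].
    + apply in_map_iff in Hg as [a [<- Ha]].
      apply (unfounded_cond_hat_rule Hf Hcomp Hr0 Ha HUg Hdep).
      apply HUrule; [exact Hr0 | exists a; auto].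
    + destruct Hg as [<- | [<- | []]]; destruct HUg.
Qed.
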